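(* Let $G$ be a finite graph whose vertex set is partitioned into stable sets $V_1,\ldots,V_r$. Let $x_1$ be a vertex in $V_r$, and suppose that $G[V_{[r-1]}]$ has an ISR (with respect to the partition $V_1,\ldots,V_{r-1}$). Suppose there do not exist a set $J \subseteq [r-1]$ and a set $D \subseteq V_J \cup \{x_1\}$ totally dominating $V_J \cup \{x_1\}$ with the following properties: (1) $D$ is the union of disjoint stable sets $X$ and $Y$; (2) $Y$ is a (not necessarily proper) partial ISR for $V_J$ (so $|Y| \le |J|$); (3) every vertex in $Y$ has exactly one neighbour in $X$ (so $|X| \le |Y|$); (4) $X$ contains $x_1$. Then $G$ has an ISR containing $x_1$.
   Context: For $J \subseteq [r] = \{1,\ldots,r\}$, $V_J$ denotes $\bigcup_{i \in J} V_i$ (with the partition into the sets $V_i$, $i\in J$), and $G[\cdot]$ denotes an induced subgraph, which inherits the partition. An independent system of representatives (ISR) of $(V_1,\ldots,V_r)$ is a stable set of size $r$ in $G$ meeting each $V_i$ exactly once. A partial ISR for $V_J$ is a stable set contained in $V_J$ meeting each $V_i$ ($i \in J$) at most once. A set $D$ totally dominates a vertex set $W$ if every vertex of $W$ (including those in $D$) has a neighbour in $D$. *)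

From mathcomp Require Import all_boot.
Set Implicit Arguments. Unset Strict Implicit. Unset Printing Implicit Defensive.

(* A finite simple graph on vertex type T: adjacency e, symmetric and irreflexive.
   The vertex partition is given by a class map part : T -> I (class V_i = part^-1(i)). *)

Definition simple_graph (T : finType) (e : rel T) : Prop :=
  symmetric e /\ irreflexive e.

Definition stable (T : finType) (e : rel T) (S : {set T}) : Prop :=
  forall x y, x \in S -> y \in S -> ~~ e x y.

Definition VJ (T I : finType) (part : T -> I) (J : {set I}) : {set T} :=
  [set v | part v \in J].

Definition partial_ISR (T I : finType) (e : rel T) (part : T -> I) (J : {set I})
  (S : {set T}) : Prop :=
  [/\ S \subset VJ part J, stable e S &
      forall i, i \in J -> #|[set v in S | part v == i]| <= 1].

Definition ISR (T I : finType) (e : rel T) (part : T -> I) (J : {set I})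
  (S : {set T}) : Prop :=
  [/\ S \subset VJ part J, stable e S &
      forall i, i \in J -> #|[set v in S | part v == i]| = 1].

Definition totally_dominates (T : finType) (e : rel T) (D W : {set T}) : Prop :=
  forall w, w \in W -> exists2 d, d \in D & e w d.

From mathcomp Require Import all_boot.
Set Implicit Arguments. Unset Strict Implicit. Unset Printing Implicit Defensive.

(* Haxell's alternating-tree argument.  Keep an ISR I of V_[r-1] and a stable
   sequence x1 = s_0, s_1, ... in which each s_k (k > 0) shares its class with
   some y in I adjacent to an earlier s_m, and each vertex of I has at most one
   neighbour in the sequence.  If some s_k has no neighbour in I, then either
   k = 0 and x1 can be added to I, or s_k replaces y in I and the sequence is
   cut after s_m.  Otherwise the sequence together with its neighbours in I is
   the forbidden configuration except for total domination, so some vertex of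
   V_J + x1 sees none of it and can be appended.  Both moves decrease the
   numbers of I-neighbours of s_0, s_1, ... lexicographically. *)

Lemma totally_dominatesP (T : finType) (e : rel T) (D W : {set T}) :
  reflect (totally_dominates e D W) [forall w in W, [exists d in D, e w d]].
Proof.
apply: (iffP forall_inP) => dom w /dom.
  by case/exists_inP=> d; exists d.
by case=> d dD ewd; apply/exists_inP; exists d.
Qed.

Lemma size_uniq_leq_card (T : finType) (s : seq T) : uniq s -> size s <= #|T|.
Proof. by move/card_uniqP <-; apply: max_card. Qed.

Section ISRTheory.
Variables (T I : finType) (e : rel T) (part : T -> I).

Lemma ISR_part (J : {set I}) (S : {set T}) v :
  ISR e part J S -> v \in S -> part v \in J.
Proof. by case=> /subsetP SJ _ _ /SJ; rewrite inE. Qed.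

Lemma ISR_inj (J : {set I}) (S : {set T}) : ISR e part J S -> {in S &, injective part}.
Proof.
move=> hS u v uS vS puv; have [_ _ cardS] := hS.
have /eqP/cards1P [w Sw] := cardS _ (ISR_part hS uS).
have : u \in [set x in S | part x == part u] by rewrite !inE uS eqxx.
have : v \in [set x in S | part x == part u] by rewrite !inE vS puv eqxx.
by rewrite Sw !inE => /eqP -> /eqP ->.
Qed.

Lemma ISR_setD1 (J : {set I}) (S : {set T}) y :
  ISR e part J S -> y \in S -> ISR e part (J :\ part y) (S :\ y).
Proof.
move=> hS yS; have injS := ISR_inj hS; have [_ stS cardS] := hS; split.
- apply/subsetP => v; rewrite !inE => /andP[vy vS]; rewrite (ISR_part hS vS) andbT.
  by apply: contra vy => /eqP/injS-> //.
- by move=> u v /setD1P[_ uS] /setD1P[_ vS]; apply: stS.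
- move=> i /setD1P[iy iJ]; rewrite -(cardS i iJ); apply: eq_card => v; rewrite !inE.
  by case: eqP => [->|] //=; rewrite eq_sym (negbTE iy) andbF.
Qed.

Lemma ISR_setU1 (J : {set I}) (S : {set T}) x :
  simple_graph e -> ISR e part J S -> part x \notin J ->
  {in S, forall y, ~~ e y x} -> ISR e part (part x |: J) (x |: S).
Proof.
move=> [e_sym e_irr] hS xJ xfree; have [_ stS cardS] := hS; split.
- apply/subsetP => v; rewrite !inE => /orP[/eqP->|vS]; first by rewrite eqxx.
  by rewrite (ISR_part hS vS) orbT.
- move=> u v /setU1P[->|uS] /setU1P[->|vS]; first by rewrite e_irr.
  + by rewrite e_sym xfree.
  + exact: xfree.
  + exact: stS.
- move=> i; case: (eqVneq i (part x)) => [->|ix] /=; rewrite !inE.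
    have -> : [set v in x |: S | part v == part x] = [set x].
      apply/setP => v; rewrite !inE; case: eqP => [->|vx] /=; first by rewrite eqxx.
      by apply/andP=> -[vS /eqP pv]; move: xJ; rewrite -pv (ISR_part hS vS).
    by rewrite cards1.
  rewrite (negbTE ix) /= => iJ; rewrite -(cardS i iJ); apply: eq_card => v.
  by rewrite !inE; case: eqP => [->|] //=; rewrite eq_sym (negbTE ix) andbF.
Qed.

End ISRTheory.

Fixpoint radix (c : nat) (ds : seq nat) : nat :=
  if ds is d :: ds' then d * c ^ size ds' + radix c ds' else 0.

Lemma radix_ub c ds : all (fun d => d < c) ds -> radix c ds < c ^ size ds.
Proof.
elim: ds => [|d ds IH] //= /andP[dc /IH ub]; rewrite expnS.
apply: leq_trans (_ : d * c ^ size ds + c ^ size ds <= _); first by rewrite ltn_add2l.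
by rewrite -mulSnr leq_mul2r dc orbT.
Qed.

Lemma radix_lex c ds ds' j : size ds' = size ds -> j < size ds ->
  (forall i, i < j -> nth 0 ds' i = nth 0 ds i) -> nth 0 ds' j < nth 0 ds j ->
  all (fun d => d < c) ds' -> radix c ds' < radix c ds.
Proof.
elim: ds ds' j => [|d ds IH] [|d' ds'] [|j] //= [sz] lt_j eq_pre lt_dj /andP[_ ds'c].
  rewrite sz; apply: leq_trans (_ : d' * c ^ size ds + c ^ size ds <= _).
    by rewrite ltn_add2l -sz radix_ub.
  by rewrite -mulSnr (leq_trans _ (leq_addr _ _)) // leq_mul2r lt_dj orbT.
have /= -> := eq_pre 0 isT; rewrite sz ltn_add2l (IH ds' j) // => i lt_ij.
exact: (eq_pre i.+1).
Qed.

Section AlternatingSequence.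
Variables (T : finType) (e : rel T) (r : nat) (part : T -> 'I_r.+1) (x1 : T).
Hypothesis graph_e : simple_graph e.
Hypothesis part_x1 : part x1 = ord_max.

Let e_sym : symmetric e := proj1 graph_e.
Let e_irr : irreflexive e := proj2 graph_e.

Definition obstruction (J : {set 'I_r.+1}) (X Y : {set T}) : Prop :=
        [/\ J \subset [set~ ord_max],
            X :|: Y \subset VJ part J :|: [set x1],
            totally_dominates e (X :|: Y) (VJ part J :|: [set x1]),
            [disjoint X & Y] & stable e X] /\
        [/\ partial_ISR e part J Y,
            (forall y, y \in Y -> #|[set x in X | e y x]| = 1) &
            x1 \in X].

Definition nbrs (I : {set T}) (x : T) : {set T} := [set y in I | e y x].

Record alternating (I : {set T}) (s : seq T) : Prop := Alternating {
  alt_ISR : ISR e part [set~ ord_max] I;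
  alt_size : 0 < size s;
  alt_head : nth x1 s 0 = x1;
  alt_uniq : uniq s;
  alt_stable : {in s &, forall a b, ~~ e a b};
  alt_private : forall y, y \in I -> {in s &, forall a b, e y a -> e y b -> a = b};
  alt_parent : forall k, 0 < k < size s -> exists2 y, y \in I &
    part y = part (nth x1 s k) /\ exists2 m, m < k & e y (nth x1 s m) }.

(* Positions past the end of [s] get the digit [#|T|.+1], larger than any
   neighbour count, so that appending to [s] decreases the potential. *)
Definition digit (I : {set T}) (s : seq T) (k : nat) : nat :=
  if k < size s then #|nbrs I (nth x1 s k)| else #|T|.+1.

Definition potential (I : {set T}) (s : seq T) : nat :=
  radix #|T|.+2 (mkseq (digit I s) #|T|).

Lemma potential_lex I I' s s' j : j < #|T| ->
  (forall i, i < j -> digit I' s' i = digit I s i) ->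
  digit I' s' j < digit I s j -> potential I' s' < potential I s.
Proof.
move=> lt_j eq_pre lt_dj; apply: (@radix_lex _ _ _ j); rewrite ?size_mkseq //.
- by move=> i lt_ij; rewrite !nth_mkseq ?eq_pre // (ltn_trans lt_ij).
- by rewrite !nth_mkseq.
apply/allP => _ /mapP[i _ ->]; rewrite /digit; case: ifP => // _.
by rewrite ltnS (leq_trans (max_card _)).
Qed.

Lemma potential_rcons I s w : uniq (rcons s w) ->
  potential I (rcons s w) < potential I s.
Proof.
move=> uniq_sw; have lt_sT : size s < #|T|.
  by rewrite -(size_rcons s w) size_uniq_leq_card.
apply: (@potential_lex _ _ _ _ (size s)) => // [i lt_is|].
  by rewrite /digit size_rcons ltnS (ltnW lt_is) lt_is nth_rcons lt_is.
by rewrite /digit size_rcons ltnSn ltnn ltnS max_card.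
Qed.

Lemma nbrs_swap I y z x : ~~ e z x -> nbrs (z |: (I :\ y)) x = nbrs I x :\ y.
Proof.
move=> zx; apply/setP => v; rewrite !inE.
by case: eqP => [->|] /=; rewrite ?(negbTE zx) ?andbF // andbA.
Qed.

Lemma nbrs0 I x : nbrs I x = set0 -> {in I, forall v, ~~ e v x}.
Proof.
move=> x_free v vI; apply/negP => evx.
have : v \in nbrs I x by rewrite inE vI evx.
by rewrite x_free inE.
Qed.

Lemma alt_x1 I s : alternating I s -> x1 \in s.
Proof. by move=> alt_s; rewrite -{1}(alt_head alt_s) mem_nth ?(alt_size alt_s). Qed.

Lemma alt_private_index I s y a b : alternating I s -> y \in I ->
  a < size s -> b < size s -> e y (nth x1 s a) -> e y (nth x1 s b) -> a = b.
Proof.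
move=> alt_s yI lt_a lt_b eya eyb; apply/eqP.
rewrite -(nth_uniq x1 lt_a lt_b (alt_uniq alt_s)); apply/eqP.
by apply: (alt_private alt_s yI) => //; apply: mem_nth.
Qed.

Lemma alt_x1_free I s : alternating I s -> nbrs I x1 = set0 ->
  exists S, ISR e part setT S /\ x1 \in S.
Proof.
move=> alt_s x1free; exists (x1 |: I); split; last exact: setU11.
have <- : part x1 |: [set~ ord_max] = setT by rewrite part_x1 setUCr.
apply: (ISR_setU1 graph_e (alt_ISR alt_s)); first by rewrite part_x1 setC11.
exact: nbrs0 x1free.
Qed.

Lemma alt_init I : ISR e part [set~ ord_max] I -> alternating I [:: x1].
Proof.
move=> isrI; split=> // [a b|y _ a b|[|k] //].
  by rewrite !inE => /eqP-> /eqP->; rewrite e_irr.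
by rewrite !inE => /eqP-> /eqP->.
Qed.

Lemma alt_swap_take I s y z m : alternating I s -> y \in I -> z \in s ->
  part z = part y -> {in I, forall v, ~~ e v z} -> m < size s -> e y (nth x1 s m) ->
  alternating (z |: (I :\ y)) (take m.+1 s).
Proof.
move=> alt_s yI zs pzy z_free lt_ms eym.
have [isrI _ hd un st pv pa] := alt_s.
have sz' : size (take m.+1 s) = m.+1 by rewrite size_takel.
have nth' i : i < m.+1 -> nth x1 (take m.+1 s) i = nth x1 s i.
  by move=> lt_im; rewrite nth_take.
split; rewrite ?sz' ?nth' ?take_uniq //.
- have := ISR_setU1 (x := z) graph_e (ISR_setD1 isrI yI).
  rewrite pzy setD1K ?(ISR_part isrI yI) //; apply; first by rewrite setD11.
  by move=> v /setD1P[_ /z_free].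
- by move=> a b /mem_take a_s /mem_take b_s; apply: st.
- move=> y' /setU1P[->|/setD1P[_ y'I]] a b /mem_take a_s /mem_take b_s.
    by rewrite (negbTE (st _ _ zs a_s)).
  exact: pv.
move=> k /andP[k0 lt_km]; have lt_ks : k < size s := leq_trans lt_km lt_ms.
have [y' y'I [py' [m' lt_mk ey'm']]] := pa k (introT andP (conj k0 lt_ks)).
have lt_m'm : m' < m := leq_trans lt_mk lt_km.
have y'y : y' != y.
  apply/eqP => y'y; move: ey'm'; rewrite y'y.
  move/(alt_private_index alt_s yI (ltn_trans lt_m'm lt_ms) lt_ms)/(_ eym) => eq_m'm.
  by move: lt_m'm; rewrite eq_m'm ltnn.
exists y'; first by rewrite !inE y'y y'I orbT.
by rewrite nth' //; split=> //; exists m'; rewrite // nth' // ltnS ltnW.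
Qed.

Lemma potential_swap I s y z m : alternating I s -> y \in I -> z \in s ->
  m < size s -> e y (nth x1 s m) ->
  potential (z |: (I :\ y)) (take m.+1 s) < potential I s.
Proof.
move=> alt_s yI zs lt_ms eym.
have zfree i : i < size s -> ~~ e z (nth x1 s i).
  by move=> lt_is; apply: (alt_stable alt_s) => //; apply: mem_nth.
apply: (@potential_lex _ _ _ _ m).
- exact: leq_trans lt_ms (size_uniq_leq_card (alt_uniq alt_s)).
- move=> i lt_im; have lt_is := ltn_trans lt_im lt_ms.
  rewrite /digit size_takel // ltnS (ltnW lt_im) lt_is nth_take ?ltnS ?(ltnW lt_im) //.
  rewrite nbrs_swap ?zfree // [RHS](cardsD1 y) [y \in _]inE yI /=.
  case: (boolP (e y _)) => [eyi|//].
  by move: lt_im; rewrite (alt_private_index alt_s yI lt_is lt_ms eyi eym) ltnn.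
rewrite /digit size_takel // ltnSn lt_ms nth_take // nbrs_swap ?zfree //.
by rewrite [X in _ < X](cardsD1 y) inE yI eym.
Qed.

Lemma alt_swap I s k : alternating I s -> 0 < k < size s ->
  nbrs I (nth x1 s k) = set0 ->
  exists I' s', alternating I' s' /\ potential I' s' < potential I s.
Proof.
move=> alt_s lt_k z_free; have [y yI [pyz [m lt_mk eym]]] := alt_parent alt_s lt_k.
have lt_ks : k < size s by case/andP: lt_k.
have lt_ms := ltn_trans lt_mk lt_ks; have zs := mem_nth x1 lt_ks.
exists (nth x1 s k |: (I :\ y)), (take m.+1 s); split.
  exact: alt_swap_take alt_s yI zs (esym pyz) (nbrs0 z_free) lt_ms eym.
exact: potential_swap.
Qed.

Definition nbrs_seq (I : {set T}) (s : seq T) : {set T} :=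
  [set y in I | [exists x in s, e y x]].

Lemma nbrs_seqP (I : {set T}) (s : seq T) y x :
  y \in I -> x \in s -> e y x -> y \in nbrs_seq I s.
Proof. by move=> yI xs eyx; rewrite inE yI; apply/exists_inP; exists x. Qed.

Lemma alt_obstruction I s : alternating I s ->
  totally_dominates e ([set x in s] :|: nbrs_seq I s)
    (VJ part (part @: nbrs_seq I s) :|: [set x1]) ->
  obstruction (part @: nbrs_seq I s) [set x in s] (nbrs_seq I s).
Proof.
move=> alt_s dom; have [isrI _ _ _ st pv pa] := alt_s; have [_ stI cardI] := isrI.
have YI : {subset nbrs_seq I s <= I} by move=> y; rewrite inE => /andP[].
split; split=> //.
- by apply/subsetP => _ /imsetP[y /YI yI ->]; exact: (ISR_part isrI yI).
- apply/subsetP => v /setUP[|vY]; last by rewrite !inE imset_f.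
  rewrite !inE => vs.
  have [k lt_ks <-] : exists2 k, k < size s & nth x1 s k = v.
    by exists (index v s); rewrite ?index_mem ?nth_index.
  case: k lt_ks => [|k] lt_ks; first by rewrite (alt_head alt_s) eqxx orbT.
  have [y yI [<- [m lt_mk eym]]] := pa k.+1 lt_ks.
  by rewrite imset_f // (nbrs_seqP yI _ eym) // mem_nth // (ltn_trans lt_mk).
- rewrite -setI_eq0; apply/set0Pn => -[v].
  rewrite !inE => /and3P[vs _ /exists_inP[x xs]].
  by rewrite (negbTE (st _ _ vs xs)).
- by move=> a b; rewrite !inE; apply: st.
- split=> [|a b /YI aI /YI bI|_ /imsetP[y yY ->]]; last 2 first.
  + exact: stI.
  + rewrite -(cardI _ (ISR_part isrI (YI _ yY))); apply/subset_leq_card/subsetP.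
    by move=> v; rewrite !inE => /andP[/andP[-> _] ->].
  by apply/subsetP => y yY; rewrite inE imset_f.
- move=> y; rewrite inE => /andP[yI /exists_inP[x xs eyx]].
  apply/eqP/cards1P; exists x; apply/setP => v; rewrite !inE.
  by apply/andP/eqP => [[vs eyv]|->]; [apply: pv eyv eyx | rewrite xs].
by rewrite inE (alt_x1 alt_s).
Qed.

Lemma alt_rcons I s w : alternating I s -> {in s, forall x, nbrs I x != set0} ->
  w \in VJ part (part @: nbrs_seq I s) :|: [set x1] ->
  {in [set x in s] :|: nbrs_seq I s, forall d, ~~ e w d} ->
  alternating I (rcons s w).
Proof.
move=> alt_s s_nbrs Ww w_free; have [isrI sz hd un st pv pa] := alt_s.
have wX x : x \in s -> ~~ e w x by move=> xs; apply: w_free; rewrite !inE xs.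
have nyw y x : y \in I -> x \in s -> e y x -> ~~ e y w.
  by move=> yI xs eyx; rewrite e_sym w_free // inE (nbrs_seqP yI xs eyx) orbT.
have ws : w \notin s.
  apply/negP => ws; have /set0Pn[y] := s_nbrs w ws.
  by rewrite inE => /andP[yI eyw]; move: (nyw y w yI ws eyw); rewrite eyw.
have [y0 y0Y pw] : exists2 y0, y0 \in nbrs_seq I s & part y0 = part w.
  move: Ww; rewrite !inE => /orP[/imsetP[y yY ->]|/eqP wx1]; first by exists y.
  by move: ws; rewrite wx1 (alt_x1 alt_s).
split=> //.
- by rewrite size_rcons.
- by rewrite nth_rcons sz.
- by rewrite rcons_uniq ws.
- move=> a b; rewrite !mem_rcons !inE => /predU1P[->|a_s] /predU1P[->|b_s].
  + by rewrite e_irr.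
  + exact: wX.
  + by rewrite e_sym wX.
  + exact: st.
- move=> y yI a b; rewrite !mem_rcons !inE => /predU1P[->|a_s] /predU1P[->|b_s] //.
  + by move=> eyw /(nyw y b yI b_s); rewrite eyw.
  + by move=> /(nyw y a yI a_s) /negbTE ->.
  + exact: pv.
move=> k; rewrite size_rcons ltnS => /andP[k0 le_ks]; rewrite nth_rcons.
case: ltnP => [lt_ks|ge_ks].
  have [y yI [py [m lt_mk eym]]] := pa k (introT andP (conj k0 lt_ks)).
  by exists y => //; split=> //; exists m; rewrite // nth_rcons (ltn_trans lt_mk lt_ks).
have -> : k = size s by apply/eqP; rewrite eqn_leq le_ks ge_ks.
move: y0Y; rewrite eqxx inE => /andP[y0I /exists_inP[x xs ey0x]].
exists y0 => //; split=> //; exists (index x s); rewrite ?index_mem //.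
by rewrite nth_rcons index_mem xs nth_index.
Qed.

Lemma alt_extend I s : ~ (exists J X Y, obstruction J X Y) -> alternating I s ->
  exists S, ISR e part setT S /\ x1 \in S.
Proof.
move=> no_obs; have [n] := ubnP (potential I s); elim: n => // n IH in I s *.
rewrite ltnS => pot_n alt_s.
have IHs I' s' : alternating I' s' -> potential I' s' < potential I s ->
    exists S, ISR e part setT S /\ x1 \in S.
  by move=> alt' lt'; apply: (IH I' s') => //; apply: leq_trans lt' pot_n.
case: (boolP (has (fun x => nbrs I x == set0) s)).
  case/hasP=> x xs /eqP x_free.
  have xk := nth_index x1 xs; case k: (index x s) xk => [|k'] xk.
    by apply: (alt_x1_free alt_s); rewrite -(alt_head alt_s) xk.
  have lt_k : 0 < k'.+1 < size s by rewrite /= -k index_mem.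
  have [I' [s' []]] := alt_swap alt_s lt_k (etrans (congr1 _ xk) x_free).
  exact: IHs.
move/hasPn=> s_nbrs.
set W := VJ part (part @: nbrs_seq I s) :|: [set x1].
set D := [set x in s] :|: nbrs_seq I s.
case: (boolP [forall w in W, [exists d in D, e w d]]) => [/totally_dominatesP dom|].
  case: no_obs; exists (part @: nbrs_seq I s), [set x in s], (nbrs_seq I s).
  exact: alt_obstruction.
case/forall_inPn=> w Ww /exists_inPn w_free.
have alt' := alt_rcons alt_s s_nbrs Ww w_free.
exact: IHs alt' (potential_rcons _ (alt_uniq alt')).
Qed.

End AlternatingSequence.

Theorem lemma3 (T : finType) (e : rel T) (r : nat) (part : T -> 'I_r.+1)
  (x1 : T) :
  simple_graph e ->
  (forall i : 'I_r.+1, stable e [set v | part v == i]) ->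
  part x1 = ord_max ->
  (exists S, ISR e part [set~ ord_max] S) ->
  ~ (exists (J : {set 'I_r.+1}) (X Y : {set T}),
        [/\ J \subset [set~ ord_max],
            X :|: Y \subset VJ part J :|: [set x1],
            totally_dominates e (X :|: Y) (VJ part J :|: [set x1]),
            [disjoint X & Y] & stable e X] /\
        [/\ partial_ISR e part J Y,
            (forall y, y \in Y -> #|[set x in X | e y x]| = 1) &
            x1 \in X]) ->
  exists S, ISR e part setT S /\ x1 \in S.
Proof.
move=> graph_e _ part_x1 [S isrS] no_obs.
exact: (alt_extend graph_e part_x1 no_obs (alt_init x1 graph_e isrS)).
Qed.
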